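(* Let $\alpha>0$, $a,c\in\mathbb C$, and $g(z)=\exp\left(\alpha az+\frac{\alpha}{2}cz^2\right)$ for $z\in\mathbb C$. If $1\le p<\infty$, then $g\in\mathcal{H}^1_{p,\alpha}$ if and only if $|c|<1$, and in this case \[ \|g\|_{p,\alpha}=\frac{1}{(1-|c|^2)^{1/(2p)}}\exp\left(\frac{\alpha}{2}\,\frac{|a|^2+\Re(\overline c a^2)}{1-|c|^2}\right). \]
   Context: For $\alpha>0$, $\gamma^1_\alpha(dz)=(\alpha/\pi)e^{-\alpha|z|^2}\lambda(dz)$ on $\mathbb C$, with $\lambda$ Lebesgue measure. $\mathcal{H}^1_{p,\alpha}$ is the space of entire functions $f$ with $\|f\|_{p,\alpha}:=\left(\int_{\mathbb C}|f|^p\,d\gamma^1_{\alpha p/2}\right)^{1/p}<\infty$. *)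

From HB Require Import structures.
From mathcomp Require Import all_boot all_order all_algebra.
From mathcomp Require Import all_classical all_reals all_analysis.
From mathcomp Require Import complex.
Set Implicit Arguments. Unset Strict Implicit. Unset Printing Implicit Defensive.
Import Order.TTheory GRing.Theory Num.Theory.
Local Open Scope ring_scope.

Definition cmod (R : realType) (z : R[i]) : R := Normc.normc z.

Section Fock.
Variable R : realType.

Definition cexp (w : R[i]) : R[i] :=
  ((expR (complex.Re w))%:C * (cos (complex.Im w) +i* sin (complex.Im w)))%C.

Definition cderivable_at (f : R[i] -> R[i]) (z : R[i]) : Prop :=
  exists f' : R[i], forall e : R, 0 < e -> exists d : R, 0 < d /\
    forall h : R[i], h != 0 -> cmod h < d ->
      cmod ((f (z + h) - f z) / h - f') < e.

Definition entire (f : R[i] -> R[i]) : Prop := forall z, cderivable_at f z.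

Definition gauss_density (beta : R) (z : R[i]) : R :=
  beta / pi * expR (- beta * cmod z ^+ 2).

(* \int_C |f|^p d gamma^1_{alpha p / 2}, as an extended real;
   C is identified with R x R via (x,y) |-> x + iy, lambda = Lebesgue on R^2 *)
Definition Lp_integral (p alpha : R) (f : R[i] -> R[i]) : \bar R :=
  (\int[(@lebesgue_measure R \x @lebesgue_measure R)%E]_(xy in setT)
     ((cmod (f (xy.1 +i* xy.2)%C)) `^ p *
        gauss_density (alpha * p / 2) (xy.1 +i* xy.2)%C)%:E)%E.

Definition in_Hpa (p alpha : R) (f : R[i] -> R[i]) : Prop :=
  entire f /\ (Lp_integral p alpha f < +oo)%E.

(* ||f||_{p,alpha} (meaningful when the integral is finite) *)
Definition norm_pa (p alpha : R) (f : R[i] -> R[i]) : R :=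
  (fine (Lp_integral p alpha f)) `^ (1 / p).

Definition gfun (alpha : R) (a c : R[i]) (z : R[i]) : R[i] :=
  cexp (alpha%:C * a * z + (alpha / 2)%:C * c * z ^+ 2)%C.

End Fock.

From HB Require Import structures.
From mathcomp Require Import all_boot all_order all_algebra.
From mathcomp Require Import all_classical all_reals all_analysis.
From mathcomp Require Import complex.
From mathcomp Require Import ring lra.
From mathcomp Require Import measurable_realfun.
Import Order.TTheory GRing.Theory Num.Theory.
Import numFieldNormedType.Exports.
Local Open Scope ring_scope.

(* For [z = x + iy], [|g z|^p] times the density of [gamma_(alpha p / 2)] is
   [K exp(-(P x^2 + 2 S x y + Q y^2) + u x + v y)] for a real quadratic form
   whose discriminant [P Q - S^2] is a positive multiple of [1 - |c|^2].  By
   Tonelli and two one-dimensional Gaussian integrals, the integral is finite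
   exactly when the form is positive definite, i.e. when [|c| < 1], and its
   value is the classical [K pi / sqrt(P Q - S^2) exp(...)].  Membership in the
   space also requires [g] to be entire: [g] is [cexp] of a quadratic polynomial,
   and [cexp u = 1 + u + o(u)] gives its complex derivative directly. *)

Lemma is_derive_linear_approx (R : realType) (f : R -> R) (x d : R) :
  is_derive x 1 f d -> forall e : R, 0 < e -> exists del : R, 0 < del /\
    forall h : R, `|h| < del -> `|f (x + h) - f x - h * d| <= e * `|h|.
Proof.
move=> [df dv] e e0.
have /cvg_ex [l fl] := df.
have ld : l = d by rewrite -dv /derive (cvg_lim _ fl).
subst l.
move/cvgrPdist_le : fl => /(_ e e0).
rewrite near_withinE => /nbhs_ballP [del del0 Hball].
exists del; split => // h hdel.
have [->|h0] := eqVneq h 0.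
  by rewrite addr0 subrr mul0r subr0 normr0 mulr0.
have hb : ball (0:R) del h by rewrite /ball /= sub0r normrN.
have /= := Hball h hb h0; rewrite /GRing.scale /= mulr1 (addrC h).
have -> : f (x + h) - f x - h * d = - (h * (d - h^-1 * (f (x + h) - f x))).
  by rewrite mulrBr mulrA divff // mul1r; ring.
rewrite normrN normrM mulrC.
have := normr_ge0 h; nra.
Qed.

Section ComplexModulus.
Context {R : realType}.
Implicit Types u v z : R[i].

Lemma cmodE (x y : R) : cmod (x +i* y)%C = Num.sqrt (x ^+ 2 + y ^+ 2).
Proof. by []. Qed.

Lemma cmod_ge0 z : 0 <= cmod z.
Proof. by case: z => x y; rewrite cmodE sqrtr_ge0. Qed.

Lemma cmod_gt0 z : z != 0 -> 0 < cmod z.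
Proof.
move=> z0; rewrite lt_def cmod_ge0 andbT.
by apply: contra z0 => /eqP /Normc.eq0_normc ->.
Qed.

Lemma cmodM u v : cmod (u * v) = cmod u * cmod v.
Proof. exact: Normc.normcM. Qed.

Lemma cmodV u : cmod u^-1 = (cmod u)^-1.
Proof. exact: Normc.normcV. Qed.

Lemma cmodD u v : cmod (u + v) <= cmod u + cmod v.
Proof. exact: le_normcD. Qed.

Lemma cmod_real (r : R) : cmod r%:C%C = `|r|.
Proof. by rewrite cmodE expr0n /= addr0 sqrtr_sqr. Qed.

Lemma cmod_sqr z : cmod z ^+ 2 = complex.Re z ^+ 2 + complex.Im z ^+ 2.
Proof. by case: z => x y; rewrite cmodE /= sqr_sqrtr // addr_ge0 // sqr_ge0. Qed.

Lemma cmod_lt1 z : (cmod z < 1) = (cmod z ^+ 2 < 1).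
Proof. by rewrite -[in RHS](expr1n R 2) ltr_pXn2r // nnegrE ?cmod_ge0. Qed.

Lemma normr_Re_le_cmod z : `|complex.Re z| <= cmod z.
Proof.
case: z => x y; rewrite cmodE /= -(sqrtr_sqr x) ler_wsqrtr //.
by rewrite lerDl sqr_ge0.
Qed.

Lemma normr_Im_le_cmod z : `|complex.Im z| <= cmod z.
Proof.
case: z => x y; rewrite cmodE /= -(sqrtr_sqr y) ler_wsqrtr //.
by rewrite lerDr sqr_ge0.
Qed.

Lemma cmod_le_normr_Re_Im z : cmod z <= `|complex.Re z| + `|complex.Im z|.
Proof.
case: z => x y; rewrite cmodE /=.
rewrite -(ger0_norm (addr_ge0 (normr_ge0 x) (normr_ge0 y))) -sqrtr_sqr.
apply: ler_wsqrtr; rewrite -[x ^+ 2]real_normK ?num_real // -[y ^+ 2]real_normK ?num_real //.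
have := normr_ge0 x; have := normr_ge0 y; nra.
Qed.

End ComplexModulus.

Section ComplexExp.
Context {R : realType}.
Implicit Types u v : R[i].

Lemma cexpD u v : cexp (u + v) = cexp u * cexp v.
Proof.
case: u => x1 y1; case: v => x2 y2; rewrite /cexp /=.
rewrite expRD sinD cosD; simpc; congr (_ +i* _)%C; ring.
Qed.

Lemma cmod_cexp u : cmod (cexp u) = expR (complex.Re u).
Proof.
rewrite /cexp cmodM cmod_real ger0_norm ?expR_ge0 // cmodE cos2Dsin2.
by rewrite sqrtr1 mulr1.
Qed.

Lemma cexp_linear_approx (e : R) : 0 < e -> exists d : R, 0 < d /\
  forall u, cmod u < d -> cmod (cexp u - 1 - u) <= e * cmod u.
Proof.
move=> e0; set e' := e / 8.
have e'0 : 0 < e' by rewrite /e' divr_gt0.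
have approx0 f f' := @is_derive_linear_approx R f 0 f'.
have [d1 [d10 H1]] := approx0 _ _ (is_derive_expR 0) _ e'0.
have [d2 [d20 H2]] := approx0 _ _ (is_derive_cos 0) _ e'0.
have [d3 [d30 H3]] := approx0 _ _ (is_derive_sin 0) _ e'0.
have [d4 [d40 H4]] := approx0 _ _ (is_derive_expR 0) _ ltr01.
have [d5 [d50 H5]] := approx0 _ _ (is_derive_sin 0) _ ltr01.
pose d := Num.min d1 (Num.min d2 (Num.min d3 (Num.min d4 (Num.min d5
   (Num.min (1/2) (e' / 4)))))).
exists d; split.
  by rewrite /d !lt_min d10 d20 d30 d40 d50 /=; apply/andP; split; lra.
case=> x y; set r := cmod _ => hu.
have hx : `|x| <= r := normr_Re_le_cmod (x +i* y)%C.
have hy : `|y| <= r := normr_Im_le_cmod (x +i* y)%C.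
move: hu; rewrite /d !lt_min => /and5P [hd1 hd2 hd3 hd4 /and3P [hd5 hd6 hd7]].
move: (H1 x) (H4 x) (H2 y) (H3 y) (H5 y); rewrite !add0r.
rewrite expR0 cos0 sin0 oppr0 !mulr0 !mulr1 !subr0 ?addr0 !mul1r.
move=> /(_ (le_lt_trans hx hd1)) hA /(_ (le_lt_trans hx hd4)) hA1
  /(_ (le_lt_trans hy hd2)) hB /(_ (le_lt_trans hy hd3)) hC
  /(_ (le_lt_trans hy hd5)) hC1.
set A := expR x - 1 - x in hA hA1; set B := cos y - 1 in hB.
set C := sin y - y in hC hC1.
have -> : cexp (x +i* y)%C - 1 - (x +i* y)%C =
    ((A * cos y + (1 + x) * B) +i* ((A + x) * sin y + C))%C.
  by rewrite /cexp /A /B /C; simpc; congr (_ +i* _)%C; ring.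
apply: le_trans (cmod_le_normr_Re_Im _) _ => /=.
have hcos : `|cos y| <= 1 := cos_max y.
have h1x : `|1 + x| <= 2 by apply: le_trans (ler_normD _ _) _; rewrite normr1; lra.
have hsin : `|sin y| <= 2 * `|y|.
  rewrite -[sin y](subrK y) -/C; apply: le_trans (ler_normD _ _) _; lra.
have hAx : `|A + x| <= e' / 2 by apply: le_trans (ler_normD _ _) _; lra.
have hRe : `|A * cos y + (1 + x) * B| <= e' * `|x| + 2 * (e' * `|y|).
  apply: le_trans (ler_normD _ _) _; rewrite !normrM.
  have := normr_ge0 A; have := normr_ge0 B; have := normr_ge0 (cos y).
  have := normr_ge0 (1 + x); nra.
have hIm : `|(A + x) * sin y + C| <= e' * `|y| + e' * `|y|.
  apply: le_trans (ler_normD _ _) _; rewrite !normrM.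
  have := normr_ge0 (A + x); have := normr_ge0 (sin y); have := normr_ge0 y.
  nra.
have := normr_ge0 x; have := normr_ge0 y; rewrite /e' in hRe hIm *; nra.
Qed.

End ComplexExp.

Section Entire.
Context {R : realType}.

Lemma cderivable_cexp_quadratic (A B z : R[i]) :
  cderivable_at (fun z => cexp (A * z + B * z ^+ 2)) z.
Proof.
set q := fun z : R[i] => A * z + B * z ^+ 2.
set w0 := A + 2%:R * B * z.
exists (cexp (q z) * w0) => e e0.
set E := cmod (cexp (q z)).
have E0 : 0 < E by rewrite /E cmod_cexp expR_gt0.
have B0 := cmod_ge0 B.
set M := cmod w0 + cmod B + 1.
have M0 : 0 < M by rewrite /M; have := cmod_ge0 w0; lra.
set e1 := e / (2 * E * M).
have e10 : 0 < e1 by rewrite /e1 divr_gt0 // !mulr_gt0.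
have [d1 [d10 Hexp]] := cexp_linear_approx _ e10.
exists (Num.min 1 (Num.min (d1 / M) (e / (2 * E * (cmod B + 1))))); split.
  by rewrite !lt_min ltr01 !divr_gt0 // !mulr_gt0 //; lra.
move=> h h0; rewrite !lt_min => /and3P [h1 hd1 hBh].
have h0' : 0 < cmod h by exact: cmod_gt0.
set w := w0 + B * h.
(* [q (z + h) = q z + h w], so the increment of [cexp \o q] factors through [cexp (h w)]. *)
have -> : (cexp (q (z + h)) - cexp (q z)) / h - cexp (q z) * w0 =
    cexp (q z) * ((cexp (h * w) - 1 - h * w) / h + B * h).
  have -> : q (z + h) = q z + h * w by rewrite /q /w /w0; ring.
  by rewrite cexpD /w; field.
have hw : cmod w <= M.
  apply: le_trans (cmodD _ _) _; rewrite cmodM /M.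
  have := cmod_ge0 w0; nra.
have hhw : cmod (h * w) < d1.
  rewrite cmodM; have := cmod_ge0 w.
  move: hd1; rewrite ltr_pdivlMr // => hd1; nra.
have Hrem : cmod ((cexp (h * w) - 1 - h * w) / h + B * h) <=
    e1 * M + cmod B * cmod h.
  apply: le_trans (cmodD _ _) _; rewrite !cmodM cmodV lerD2r ler_pdivrMr //.
  apply: le_trans (Hexp _ hhw) _; rewrite cmodM.
  have : 0 <= e1 * cmod h by rewrite mulr_ge0 // ltW.
  nra.
have hE1 : E * (e1 * M) = e / 2 by rewrite /e1; field; rewrite !gt_eqF.
have hEB : E * (cmod B * cmod h) < e / 2.
  move: hBh; rewrite ltr_pdivlMr; last by rewrite !mulr_gt0 //; lra.
  nra.
rewrite cmodM -/E; apply: le_lt_trans (ler_wpM2l (ltW E0) Hrem) _.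
rewrite mulrDr; lra.
Qed.

Lemma gfun_entire (alpha : R) (a c : R[i]) : entire (gfun alpha a c).
Proof. by move=> z; apply: cderivable_cexp_quadratic. Qed.

End Entire.

Local Open Scope classical_set_scope.

Section GaussianIntegrals.
Context {R : realType}.
Local Notation mu := (@lebesgue_measure R).

Lemma measurable_exp_quadratic (K A B C : R) :
  measurable_fun [set: R] (fun x => (K * expR (- A * x ^+ 2 + B * x + C))%:E).
Proof.
apply/measurable_EFinP; apply: measurable_funM => //.
apply: measurableT_comp; first exact: measurable_expR.
apply: measurable_funD => //; apply: measurable_funD; last exact: measurable_funM.
by apply: measurable_funM => //; exact: measurable_funX.
Qed.

(* Completing the square turns the integrand into a multiple of a normal density. *)
Lemma integral_exp_quadratic (K A B C : R) : 0 < A ->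
  (\int[mu]_x (K * expR (- A * x ^+ 2 + B * x + C))%:E =
   (K * Num.sqrt (pi / A) * expR (B ^+ 2 / (4 * A) + C))%:E)%E.
Proof.
move=> A0.
set s := Num.sqrt ((2 * A)^-1).
have s2 : s ^+ 2 = (2 * A)^-1 by rewrite sqr_sqrtr // invr_ge0; lra.
have s0 : s != 0.
  apply/eqP => s0; move: s2; rewrite s0 expr0n /= => /esym/eqP.
  by rewrite invr_eq0; lra.
set m := B / (2 * A).
have peak : normal_peak s = (Num.sqrt (pi / A))^-1.
  by rewrite /normal_peak s2 -mulr_natr; congr ((Num.sqrt _)^-1); field; lra.
have sqrt_pi_A0 : Num.sqrt (pi / A) != 0.
  by rewrite gt_eqF // sqrtr_gt0 divr_gt0 // pi_gt0.
have density x : K * expR (- A * x ^+ 2 + B * x + C) =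
    K * Num.sqrt (pi / A) * expR (B ^+ 2 / (4 * A) + C) * normal_pdf m s x.
  rewrite normal_pdfE // /normal_fun peak.
  have -> : - A * x ^+ 2 + B * x + C =
      (B ^+ 2 / (4 * A) + C) + - (x - m) ^+ 2 / (s ^+ 2 *+ 2).
    by rewrite s2 /m -mulr_natr; field; lra.
  by rewrite expRD; field.
under eq_integral do rewrite density EFinM.
rewrite integralZl //; last exact: integrable_normal_pdf.
by rewrite integral_normal_pdf mule1.
Qed.

(* For [A <= 0] the integrand is at least [K e^C] on a half-line. *)
Lemma integral_exp_quadratic_pinfty (K A B C : R) : 0 < K -> A <= 0 ->
  (\int[mu]_x (K * expR (- A * x ^+ 2 + B * x + C))%:E = +oo)%E.
Proof.
move=> K0 A0.
pose H : set R := if 0 <= B then `[0, +oo[%classic else `]-oo, 0]%classic.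
have mH : measurable H by rewrite /H; case: ifP => _; exact: measurable_itv.
have muH : mu H = +oo%E.
  by rewrite /H; case: ifP => _; rewrite lebesgue_measure_itv /= ?ltry ?ltNyr.
have f_ge0 x : [set: R] x -> (0 <= (K * expR (- A * x ^+ 2 + B * x + C))%:E)%E.
  by move=> _; rewrite lee_fin mulr_ge0 // ?expR_ge0 // ltW.
apply/eqP; rewrite eq_le leey /=.
apply: le_trans _ (ge0_subset_integral mu mH measurableT
  (measurable_exp_quadratic K A B C) f_ge0 (@subsetT _ H)).
have <- : (\int[mu]_(x in H) (cst (K * expR C)%:E) x = +oo)%E.
  rewrite integral_cst // [X in (_ * X)%E]muH.
  by rewrite gt0_muley // lte_fin mulr_gt0 // expR_gt0.
apply: ge0_le_integral => //.
- by move=> x _; rewrite lee_fin mulr_ge0 // ?expR_ge0 // ltW.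
- exact: measurable_funS (measurable_exp_quadratic K A B C).
move=> x Hx; rewrite lee_fin ler_pM2l // ler_expR lerDr.
have hA : 0 <= - A * x ^+ 2 by rewrite mulr_ge0 ?sqr_ge0 // oppr_ge0.
move: Hx; rewrite /H; case: ifP => hB /=; rewrite in_itv /= ?andbT => hx.
- by rewrite addr_ge0 // mulr_ge0.
- have : 0 <= B * x by rewrite nmulr_rge0 // ltNge hB.
  lra.
Qed.

Definition exp_quadform2 (K P Q S u v : R) (xy : R * R) : R :=
  K * expR (- P * xy.1 ^+ 2 - Q * xy.2 ^+ 2 - 2 * S * xy.1 * xy.2
            + u * xy.1 + v * xy.2).

Definition exp_quadform2_integral (K P Q S u v : R) : R :=
  K * pi / Num.sqrt (P * Q - S ^+ 2) *
      expR ((Q * u ^+ 2 - 2 * S * u * v + P * v ^+ 2) / (4 * (P * Q - S ^+ 2))).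

Lemma measurable_exp_quadform2 (K P Q S u v : R) :
  measurable_fun [set: R * R] (fun xy => (exp_quadform2 K P Q S u v xy)%:E).
Proof.
apply/measurable_EFinP; apply: measurable_funM => //.
apply: measurableT_comp; first exact: measurable_expR.
have m1 : measurable_fun [set: R * R] (fun xy : R * R => xy.1) := measurable_fst.
have m2 : measurable_fun [set: R * R] (fun xy : R * R => xy.2) := measurable_snd.
repeat apply: measurable_funD => //; try apply: measurable_funN;
  repeat apply: measurable_funM => //; exact: measurable_funX.
Qed.

(* Tonelli, then two one-dimensional Gaussian integrals: first in [y], which
   needs [Q > 0], then in [x], whose quadratic coefficient is [(P Q - S^2) / Q]. *)
Lemma integral_exp_quadform2 (K P Q S u v : R) : 0 < K ->
  (\int[(mu \x mu)%E]_(xy in setT) (exp_quadform2 K P Q S u v xy)%:E =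
   if ((0 < Q) && (0 < P * Q - S ^+ 2))%R then (exp_quadform2_integral K P Q S u v)%:E
   else +oo)%E.
Proof.
move=> K0.
rewrite fubini_tonelli1 //; last 2 first.
- exact: measurable_exp_quadform2.
- by move=> xy; rewrite lee_fin /exp_quadform2 mulr_ge0 // ?expR_ge0 // ltW.
rewrite /fubini_F /=.
have inner x : (fun y => (exp_quadform2 K P Q S u v (x, y))%:E) =
    (fun y => (K * expR (- Q * y ^+ 2 + (v - 2 * S * x) * y + (- P * x ^+ 2 + u * x)))%:E).
  by apply/funext => y; rewrite /exp_quadform2 /=; congr (_ * expR _)%:E; ring.
have [Q0|Q0] := ltP 0 Q; last first.
  under eq_integral do rewrite inner integral_exp_quadratic_pinfty //.
  by rewrite integral_cst //= -set_itvNyy lebesgue_measure_itv.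
under eq_integral do rewrite inner integral_exp_quadratic //.
set D := P * Q - S ^+ 2.
have outer x :
  K * Num.sqrt (pi / Q) * expR ((v - 2 * S * x) ^+ 2 / (4 * Q) + (- P * x ^+ 2 + u * x)) =
  K * Num.sqrt (pi / Q) * expR (- (D / Q) * x ^+ 2 + (u - v * S / Q) * x
     + v ^+ 2 / (4 * Q)).
  by congr (_ * expR _); rewrite /D; field; lra.
under eq_integral do rewrite outer.
have K'0 : 0 < K * Num.sqrt (pi / Q) by rewrite mulr_gt0 // sqrtr_gt0 divr_gt0 // pi_gt0.
have [D0|D0] := ltP 0 D; last first.
  by rewrite integral_exp_quadratic_pinfty // ler_pdivrMr // mul0r.
rewrite integral_exp_quadratic ?divr_gt0 //.
congr EFin; rewrite /exp_quadform2_integral -/D -!mulrA; congr (_ * _).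
have sD : 0 < Num.sqrt D by rewrite sqrtr_gt0.
rewrite mulrA -sqrtrM; last by rewrite divr_ge0 // ?pi_ge0 // ltW.
have -> : pi / Q * (pi / (D / Q)) = (pi / Num.sqrt D) ^+ 2.
  rewrite expr_div_n sqr_sqrtr; last exact: ltW.
  by field; rewrite !gt_eqF //; lra.
rewrite sqrtr_sqr ger0_norm; last by rewrite divr_ge0 ?pi_ge0 // ltW.
by rewrite -mulrA; congr (_ * (_ * expR _)); rewrite /D; field; rewrite !gt_eqF //; lra.
Qed.

End GaussianIntegrals.

Section FockIntegrand.
Context {R : realType}.

Lemma Re_fock_exponent (alpha x y : R) (a c : R[i]) :
  complex.Re (alpha%:C * a * (x +i* y) + (alpha / 2)%:C * c * (x +i* y) ^+ 2)%C =
  alpha * (complex.Re a * x - complex.Im a * y) +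
  alpha / 2 * (complex.Re c * (x ^+ 2 - y ^+ 2) - 2 * complex.Im c * x * y).
Proof. by case: a => a1 a2; case: c => c1 c2; rewrite expr2 /=; ring. Qed.

Lemma Re_conjc_mul_sqr (a c : R[i]) :
  complex.Re (complex.conjc c * a ^+ 2) =
  complex.Re c * (complex.Re a ^+ 2 - complex.Im a ^+ 2) +
  2 * complex.Im c * complex.Re a * complex.Im a.
Proof. by case: a => a1 a2; case: c => c1 c2; rewrite !expr2 /=; ring. Qed.

Lemma Lp_integral_gfun (alpha p : R) (a c : R[i]) :
  let b := alpha * p / 2 in
  Lp_integral p alpha (gfun alpha a c) =
  (\int[(@lebesgue_measure R \x @lebesgue_measure R)%E]_(xy in setT)
    (exp_quadform2 (b / pi) (b * (1 - complex.Re c)) (b * (1 + complex.Re c))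
      (b * complex.Im c) (2 * b * complex.Re a) (- (2 * b * complex.Im a)) xy)%:E)%E.
Proof.
move=> b; apply: eq_integral => -[x y] _.
rewrite (_ : (x, y).1 = x) // (_ : (x, y).2 = y) //.
rewrite /gfun cmod_cexp -expRM /gauss_density cmod_sqr /exp_quadform2 /= Re_fock_exponent.
rewrite mulrCA -expRD; congr (_ * expR _)%:E; rewrite /b.
by move: (complex.Re a) (complex.Im a) (complex.Re c) (complex.Im c) => a1 a2 c1 c2; field.
Qed.

Lemma fock_quadform_discriminant (b : R) (c : R[i]) :
  b * (1 - complex.Re c) * (b * (1 + complex.Re c)) - (b * complex.Im c) ^+ 2 =
  b ^+ 2 * (1 - cmod c ^+ 2).
Proof. by rewrite cmod_sqr; ring. Qed.

Lemma fock_quadform_definite (b : R) (c : R[i]) : 0 < b ->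
  ((0 < b * (1 + complex.Re c)) &&
   (0 < b * (1 - complex.Re c) * (b * (1 + complex.Re c)) - (b * complex.Im c) ^+ 2))
  = (cmod c < 1).
Proof.
move=> b0; rewrite fock_quadform_discriminant !pmulr_rgt0 ?exprn_gt0 // subr_gt0.
rewrite cmod_lt1; apply/andP/idP => [[] //|c1]; split => //.
have : complex.Re c ^+ 2 < 1 by apply: le_lt_trans c1; rewrite cmod_sqr lerDl sqr_ge0.
nra.
Qed.

Lemma fock_quadform_integral (b : R) (a c : R[i]) : 0 < b -> cmod c < 1 ->
  exp_quadform2_integral (b / pi) (b * (1 - complex.Re c)) (b * (1 + complex.Re c))
    (b * complex.Im c) (2 * b * complex.Re a) (- (2 * b * complex.Im a)) =
  (Num.sqrt (1 - cmod c ^+ 2))^-1 *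
  expR (b * ((cmod a ^+ 2 + complex.Re (complex.conjc c * a ^+ 2)) / (1 - cmod c ^+ 2))).
Proof.
move=> b0; rewrite cmod_lt1 -subr_gt0 => d0.
rewrite /exp_quadform2_integral fock_quadform_discriminant.
rewrite sqrtrM ?sqr_ge0 // sqrtr_sqr ger0_norm ?ltW //.
have s0 : 0 < Num.sqrt (1 - cmod c ^+ 2) by rewrite sqrtr_gt0.
have pi0 : 0 < pi :> R := pi_gt0 R.
have -> : b / pi * pi / (b * Num.sqrt (1 - cmod c ^+ 2)) =
    (Num.sqrt (1 - cmod c ^+ 2))^-1.
  by move: (pi : R) pi0 s0 => q q0 s0; field; rewrite !gt_eqF.
congr (_ * expR _); rewrite Re_conjc_mul_sqr !cmod_sqr in d0 *.
by field; rewrite !gt_eqF.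
Qed.

End FockIntegrand.

Theorem lemma5p1 (R : realType) (alpha : R) (a c : R[i]) (p : R) :
  0 < alpha -> 1 <= p ->
  (in_Hpa p alpha (gfun alpha a c) <-> cmod c < 1) /\
  (cmod c < 1 ->
     norm_pa p alpha (gfun alpha a c) =
       (1 - cmod c ^+ 2) `^ (- (1 / (2 * p))) *
       expR (alpha / 2 * ((cmod a ^+ 2 + complex.Re (complex.conjc c * a ^+ 2)) / (1 - cmod c ^+ 2)))).
Proof.
move=> alpha0 p1; have p0 : 0 < p by lra.
have b0 : 0 < alpha * p / 2 by rewrite divr_gt0 // mulr_gt0.
have Lp_gfun := Lp_integral_gfun alpha p a c.
have K0 : 0 < alpha * p / 2 / pi by rewrite divr_gt0 // pi_gt0.
rewrite /= integral_exp_quadform2 // in Lp_gfun.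
rewrite fock_quadform_definite // in Lp_gfun; split.
  split => [[_]|c1]; first by rewrite Lp_gfun; case: ifP.
  by split; [exact: gfun_entire | rewrite Lp_gfun c1 ltry].
move=> c1; rewrite /norm_pa Lp_gfun c1 /= fock_quadform_integral //.
have d0 : 0 < 1 - cmod c ^+ 2 by rewrite subr_gt0 -cmod_lt1.
rewrite powRM ?invr_ge0 ?sqrtr_ge0 ?expR_ge0 // -expRM.
rewrite -powR12_sqrt ?ltW // -powRN -powRrM.
by congr (_ `^ _ * expR _); field; rewrite ?gt_eqF.
Qed.
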